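(* Let $p\in\mathbb{R}$. Every $z=(v,m,\sigma,e)\in Z$ satisfying $m\ne(e+p)v$, $2e-|v|^2>0$ and $M(z)=0$ belongs to $K^{\Lambda,1}$.
   Context: $\mathcal S_0^{2\times2}$ is the space of traceless symmetric $2\times2$ matrices, $Z:=\mathbb{R}^2\times\mathbb{R}^2\times\mathcal S_0^{2\times2}\times\mathbb{R}$, $K:=\{z\in Z: v\otimes v-\sigma=e\,\mathrm{Id},\ m=(e+p)v\}$. The wave cone is $\Lambda=\{\bar z=(\bar v,\bar m,\bar\sigma,\bar e)\in Z:\ (\bar v,\bar e)\neq0\text{ and there is }0\ne(\xi,c)\in\mathbb{R}^2\times\mathbb{R}\text{ with }(\bar\sigma+\bar e\,\mathrm{Id})\xi+c\bar v=0,\ \bar v\cdot\xi=0,\ \bar m\cdot\xi+c\bar e=0\}$. For a set $A\subset Z$, $A^{\Lambda,1}:=A\cup\{sz_1+(1-s)z_2: z_1,z_2\in A,\ s\in[0,1],\ z_1-z_2\in\Lambda\}$, and $K^{\Lambda,1}$ is this for $A=K$. For $z$ with $m\ne(e+p)v$ set $\eta(z):=\frac{m-(e+p)v}{|m-(e+p)v|}$ and $M(z):=v\otimes v-\sigma-e\,\mathrm{Id}+(2e-|v|^2)\eta(z)\otimes\eta(z)$. *)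

(* Reals: an arbitrary real closed field R (contains the
   case R = the real numbers; only field operations, order and sqrt are used). *)
From mathcomp Require Import all_boot all_order all_algebra.
Set Implicit Arguments. Unset Strict Implicit. Unset Printing Implicit Defensive.
Import Order.TTheory GRing.Theory Num.Theory.
Local Open Scope ring_scope.

Section Defs.
Variable R : rcfType.

Record Zt := mkZ { zv : 'cV[R]_2; zm : 'cV[R]_2; zsigma : 'M[R]_2; ze : R }.

Definition inZ (z : Zt) : Prop := (zsigma z)^T = zsigma z /\ \tr (zsigma z) = 0.

Definition dot (a b : 'cV[R]_2) : R := \sum_(i < 2) a i 0 * b i 0.
Definition vnorm (a : 'cV[R]_2) : R := Num.sqrt (dot a a).
Definition tens (a b : 'cV[R]_2) : 'M[R]_2 := a *m b^T.

Definition zadd (z1 z2 : Zt) : Zt :=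
  mkZ (zv z1 + zv z2) (zm z1 + zm z2) (zsigma z1 + zsigma z2) (ze z1 + ze z2).
Definition zscale (s : R) (z : Zt) : Zt :=
  mkZ (s *: zv z) (s *: zm z) (s *: zsigma z) (s * ze z).
Definition zsub (z1 z2 : Zt) : Zt := zadd z1 (zscale (-1) z2).

Definition Kset (p : R) (z : Zt) : Prop :=
  inZ z /\ tens (zv z) (zv z) - zsigma z = (ze z)%:M
        /\ zm z = (ze z + p) *: zv z.

Definition wave_cone (zb : Zt) : Prop :=
  inZ zb /\ (zv zb != 0 \/ ze zb != 0) /\
  exists (xi : 'cV[R]_2) (c : R), (xi != 0 \/ c != 0) /\
    (zsigma zb + (ze zb)%:M) *m xi + c *: zv zb = 0 /\
    dot (zv zb) xi = 0 /\
    dot (zm zb) xi + c * ze zb = 0.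

Definition K_lam1 (p : R) (z : Zt) : Prop :=
  Kset p z \/
  exists (z1 z2 : Zt) (s : R), Kset p z1 /\ Kset p z2 /\ 0 <= s <= 1 /\
    wave_cone (zsub z1 z2) /\ z = zadd (zscale s z1) (zscale (1 - s) z2).

Definition wdef (p : R) (z : Zt) : 'cV[R]_2 := zm z - (ze z + p) *: zv z.
Definition eta (p : R) (z : Zt) : 'cV[R]_2 := (vnorm (wdef p z))^-1 *: wdef p z.
Definition Mz (p : R) (z : Zt) : 'M[R]_2 :=
  tens (zv z) (zv z) - zsigma z - (ze z)%:M
  + (2 * ze z - vnorm (zv z) ^+ 2) *: tens (eta p z) (eta p z).

End Defs.

From mathcomp Require Import all_boot all_order all_algebra.
From mathcomp Require Import ring lra.
Set Implicit Arguments.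
Unset Strict Implicit.
Unset Printing Implicit Defensive.
Import Order.TTheory GRing.Theory Num.Theory.
Local Open Scope ring_scope.

(* Write w = m - (e+p)v = |w| eta and d = 2e - |v|^2 > 0, so that M(z) = 0 reads
   sigma = v (x) v - e Id + d eta (x) eta.  A point of K is determined by its
   velocity u (then e = |u|^2/2, sigma = u (x) u - e Id, m = (e+p)u), and two
   points of K with different velocities always differ by a wave-cone vector.
   So it suffices to write z = s z1 + (1-s) z2 with z1, z2 in K of velocities
   v + t_i eta.  Averaging, the velocities give v iff the two-point law
   (s, t_1; 1-s, t_2) has mean 0, sigma and e match iff its variance is d, and
   m matches iff its third moment is 2(|w| - (v.eta) d); such a law exists
   because d > 0. *)

Lemma line_neq (F : fieldType) (V : lmodType F) (v n : V) (t1 t2 : F) :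
  n != 0 -> t1 != t2 -> v + t1 *: n != v + t2 *: n.
Proof.
move=> n0 t12; rewrite (inj_eq (addrI v)) -subr_eq0 -scalerBl scaler_eq0.
by rewrite subr_eq0 negb_or t12.
Qed.

Section Coordinates.
Variable R : rcfType.
Implicit Types (a b : 'cV[R]_2) (A B : 'M[R]_2).

Lemma sum_ord2 (F : 'I_2 -> R) : \sum_(i < 2) F i = F ord0 + F ord_max.
Proof. by rewrite big_ord_recr big_ord1; congr (F _ + _); apply: val_inj. Qed.

Lemma ord2P (i : 'I_2) : i = ord0 \/ i = ord_max.
Proof. by case: i => -[|[|//]] ?; [left | right]; apply: val_inj. Qed.

Lemma col2P a b :
  a ord0 ord0 = b ord0 ord0 -> a ord_max ord0 = b ord_max ord0 -> a = b.
Proof.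
by move=> h0 h1; apply/matrixP => i j; rewrite ord1; case: (ord2P i) => ->.
Qed.

Lemma mx2P A B :
  A ord0 ord0 = B ord0 ord0 -> A ord0 ord_max = B ord0 ord_max ->
  A ord_max ord0 = B ord_max ord0 -> A ord_max ord_max = B ord_max ord_max ->
  A = B.
Proof.
move=> h00 h01 h10 h11; apply/matrixP => i j.
by case: (ord2P i) => ->; case: (ord2P j) => ->.
Qed.

Lemma dotE a b : dot a b = a ord0 0 * b ord0 0 + a ord_max 0 * b ord_max 0.
Proof. by rewrite /dot sum_ord2. Qed.

Lemma tensE a b i j : tens a b i j = a i 0 * b j 0.
Proof. by rewrite !mxE big_ord1 mxE. Qed.

Lemma trE A : \tr A = A ord0 ord0 + A ord_max ord_max.
Proof. by rewrite /mxtrace sum_ord2. Qed.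

End Coordinates.

Ltac coords :=
  rewrite ?dotE ?trE ?sum_ord2; rewrite ?(tensE, mxE, big_ord1, sum_ord2) /=.

Section Dot.
Variable R : rcfType.
Implicit Types (a v n : 'cV[R]_2).

Lemma dot_ge0 a : 0 <= dot a a.
Proof. by apply: sumr_ge0 => i _; rewrite -expr2 sqr_ge0. Qed.

Lemma dot_eq0 a : (dot a a == 0) = (a == 0).
Proof.
apply/eqP/eqP => [a0 | ->]; last by rewrite /dot big1 // => i _; rewrite mxE mul0r.
apply/matrixP => i j; rewrite ord1 mxE.
have sq_ge0 (k : 'I_2) : true -> 0 <= a k 0 * a k 0 by rewrite -expr2 sqr_ge0.
have /eqP := psumr_eq0P sq_ge0 a0 (i := i) isT.
by rewrite mulf_eq0 orbb => /eqP.
Qed.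

Lemma dot_gt0 a : a != 0 -> 0 < dot a a.
Proof. by move=> a0; rewrite lt0r dot_eq0 a0 dot_ge0. Qed.

Lemma vnorm_sqr a : vnorm a ^+ 2 = dot a a.
Proof. by rewrite sqr_sqrtr // dot_ge0. Qed.

Lemma vnorm_gt0 a : a != 0 -> 0 < vnorm a.
Proof. by move=> a0; rewrite sqrtr_gt0 dot_gt0. Qed.

Lemma dot_normalize a : a != 0 -> dot ((vnorm a)^-1 *: a) ((vnorm a)^-1 *: a) = 1.
Proof.
move=> /vnorm_gt0 /gt_eqF /negbT na0.
transitivity ((vnorm a)^-1 ^+ 2 * dot a a); first by coords; ring.
by rewrite -vnorm_sqr -exprMn mulVf ?expr1n.
Qed.

Lemma dot_line v n t :
  dot (v + t *: n) (v + t *: n) = dot v v + 2 * t * dot v n + t ^+ 2 * dot n n.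
Proof. by coords; ring. Qed.

End Dot.

Section KPoints.
Variables (R : rcfType) (p : R).

Definition kpoint (u : 'cV[R]_2) : Zt R :=
  mkZ u ((dot u u / 2 + p) *: u) (tens u u - (dot u u / 2)%:M) (dot u u / 2).

Lemma Kset_kpoint u : Kset p (kpoint u).
Proof.
split; [split | split] => //=; last by rewrite subKr.
- by apply/mx2P; coords; ring.
- by coords; field.
Qed.

Lemma inZ_zsub (z1 z2 : Zt R) : inZ z1 -> inZ z2 -> inZ (zsub z1 z2).
Proof.
case=> sym1 tr1 [sym2 tr2]; split => /=.
  by rewrite linearD linearZ /= sym1 sym2.
by rewrite mxtraceD mxtraceZ tr1 tr2 mulr0 addr0.
Qed.

Lemma wave_cone_sub_Kset (z1 z2 : Zt R) :
  Kset p z1 -> Kset p z2 -> zv z1 != zv z2 -> wave_cone (zsub z1 z2).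
Proof.
move=> K1 K2 v12; split; first exact: inZ_zsub K1.1 K2.1.
case: z1 z2 K1 K2 v12 => [v1 m1 s1 e1] [v2 m2 s2 e2].
move=> [_ [/= hs1 ->]] [_ [/= hs2 ->]] v12.
have {hs1}-> : s1 = tens v1 v1 - e1%:M by rewrite -hs1 subKr.
have {hs2}-> : s2 = tens v2 v2 - e2%:M by rewrite -hs2 subKr.
split; first by left; rewrite /= scaleN1r subr_eq0.
(* xi is the velocity jump rotated by a right angle, so v1.xi = v2.xi = -c. *)
set xi : 'cV[R]_2 :=
  \col_i (if i == ord0 then v2 ord_max 0 - v1 ord_max 0 else v1 ord0 0 - v2 ord0 0).
exists xi, (- dot v1 xi); split.
  left; apply: contra_neq v12 => xi0.
  have := congr1 (fun a : 'cV[R]_2 => a ord0 0) xi0.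
  have := congr1 (fun a : 'cV[R]_2 => a ord_max 0) xi0.
  rewrite !mxE /= => h1 h0; apply/col2P; lra.
by split; [apply/col2P | split]; rewrite /xi; coords; ring.
Qed.

End KPoints.

(* The law giving weight s to (1 - s) del and weight 1 - s to - s del has mean 0,
   variance s (1 - s) del^2 and third moment s (1 - s) (1 - 2 s) del^3. *)
Lemma two_point_law_exists (R : rcfType) (d q : R) : 0 < d ->
  exists s del : R, [/\ del != 0, 0 <= s <= 1,
    s * (1 - s) * del ^+ 2 = d & s * (1 - s) * (1 - 2 * s) * del ^+ 3 = q].
Proof.
move=> d0; pose S := q / d; pose del := Num.sqrt (S ^+ 2 + 4 * d).
have del2 : del ^+ 2 = S ^+ 2 + 4 * d by rewrite sqr_sqrtr //; nra.
have del0 : 0 < del by rewrite sqrtr_gt0; nra.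
have [S_lt S_gt] : S < del /\ - del < S by split; nra.
exists ((del - S) / (2 * del)), del; split.
- by rewrite gt_eqF.
- apply/andP; split; first by apply: divr_ge0; lra.
  by rewrite ler_pdivrMr ?mulr_gt0 // mul1r; lra.
- transitivity ((del ^+ 2 - S ^+ 2) / 4); first by field; rewrite gt_eqF.
  by rewrite del2; field.
- transitivity ((del ^+ 2 - S ^+ 2) / 4 * S); first by field; rewrite gt_eqF.
  by rewrite del2 /S; field; rewrite gt_eqF.
Qed.

Lemma kpoint_split (R : rcfType) (p e W s del : R) (v n : 'cV[R]_2) :
  dot n n = 1 ->
  s * (1 - s) * del ^+ 2 = 2 * e - dot v v ->
  s * (1 - s) * (1 - 2 * s) * del ^+ 3 = 2 * (W - dot v n * (2 * e - dot v v)) ->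
  zadd (zscale s (kpoint p (v + ((1 - s) * del) *: n)))
       (zscale (1 - s) (kpoint p (v + (- s * del) *: n)))
  = mkZ v ((e + p) *: v + W *: n) (tens v v - e%:M + (2 * e - dot v v) *: tens n n) e.
Proof.
move=> n1 var skew; rewrite /kpoint /zadd /zscale /= !dot_line n1.
have -> : W = dot v n * (s * (1 - s) * del ^+ 2) + s * (1 - s) * (1 - 2 * s) * del ^+ 3 / 2.
  by rewrite skew var; field.
have -> : e = (dot v v + s * (1 - s) * del ^+ 2) / 2 by rewrite var; field.
by congr mkZ; [apply/col2P | apply/col2P | apply/mx2P | ]; coords; field.
Qed.

Lemma Mz_eq0_decomp (R : rcfType) (p : R) (z : Zt R) :
  wdef p z != 0 -> Mz p z = 0 ->
  z = mkZ (zv z) ((ze z + p) *: zv z + vnorm (wdef p z) *: eta p z)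
        (tens (zv z) (zv z) - (ze z)%:M
         + (2 * ze z - dot (zv z) (zv z)) *: tens (eta p z) (eta p z)) (ze z).
Proof.
move=> /vnorm_gt0 /gt_eqF /negbT w0; case: z w0 => v m sigma e /= w0.
rewrite /Mz /= vnorm_sqr => /eqP M0; congr mkZ.
  by rewrite /eta scalerA mulfV // scale1r subrKC.
by apply/eqP; rewrite eq_sym -subr_eq0 addrAC (addrAC (tens v v)).
Qed.

Theorem lemma2p6 (R : rcfType) (p : R) (z : Zt R) :
  inZ z ->
  zm z != (ze z + p) *: zv z ->
  0 < 2 * ze z - vnorm (zv z) ^+ 2 ->
  Mz p z = 0 ->
  K_lam1 p z.
Proof.
move=> _ w0 d0 M0; rewrite vnorm_sqr in d0.
have {}w0 : wdef p z != 0 by rewrite subr_eq0.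
have eta1 : dot (eta p z) (eta p z) = 1 := dot_normalize w0.
set v := zv z; set e := ze z; set n := eta p z; set W := vnorm (wdef p z).
have [s [del [del0 s01 var skew]]] :=
  two_point_law_exists (2 * (W - dot v n * (2 * e - dot v v))) d0.
right; exists (kpoint p (v + ((1 - s) * del) *: n)), (kpoint p (v + (- s * del) *: n)), s.
refine (conj (Kset_kpoint _ _) (conj (Kset_kpoint _ _) (conj s01 (conj _ _)))).
  apply: wave_cone_sub_Kset; [exact: Kset_kpoint | exact: Kset_kpoint |].
  apply: line_neq; first by rewrite -dot_eq0 eta1 oner_eq0.
  by rewrite -subr_eq0 mulNr opprK -mulrDl subrK mul1r.
by rewrite (kpoint_split p eta1 var skew); exact: Mz_eq0_decomp w0 M0.
Qed.
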